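(* Let $a$ and $b$ be relatively prime integers with $1<a<b$, let $(u,v)$ be the definitely least solution of $ax+by=1$, let $S=\langle a,b\rangle$, and let $h=\min I(S)$. Then $$I(S)=\{\,h+kb+ja : 0\le k\le |v|-1,\ 0\le j\le |u|-1\,\},$$ i.e. $I(S)=\{h,h+a,\dots,h+(|u|-1)a\}\cup\{h+b,h+b+a,\dots,h+b+(|u|-1)a\}\cup\cdots\cup\{h+(|v|-1)b,\dots,h+(|v|-1)b+(|u|-1)a\}$.
   Context: $\mathbb{N}$ is the set of nonnegative integers and $\langle a,b\rangle=\{\lambda_1a+\lambda_2b:\lambda_1,\lambda_2\in\mathbb{N}\}$. An isolated gap of a numerical semigroup $S$ is an element $x\in\mathbb{N}\setminus S$ with $x-1\in S$ and $x+1\in S$; $I(S)$ is the set of isolated gaps (it is nonempty for $S=\langle a,b\rangle$). The definitely least solution $(u,v)$ of $ax+by=1$ is the unique integer solution for which both $|u|$ and $|v|$ are as small as possible; equivalently the solution with $|u|\le b/2$ and $|v|\le a/2$. *)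

From mathcomp Require Import all_boot all_order all_algebra.
Set Implicit Arguments. Unset Strict Implicit. Unset Printing Implicit Defensive.
Import Order.TTheory GRing.Theory Num.Theory.

Definition in_sg2 (a b x : nat) : Prop := exists l1 l2 : nat, x = l1 * a + l2 * b.

(* x is an isolated gap of <a,b>: x not in S, x-1 in S, x+1 in S.
   (x = 0 is never a gap since 0 is in S, so x >= 1 and x - 1 is the true predecessor.) *)
Definition isolated_gap (a b x : nat) : Prop :=
  [/\ ~ in_sg2 a b x, 0 < x, in_sg2 a b x.-1 & in_sg2 a b x.+1].

From mathcomp Require Import all_boot all_order all_algebra.
From mathcomp Require Import zify ring.
Set Implicit Arguments. Unset Strict Implicit. Unset Printing Implicit Defensive.
Import Order.TTheory GRing.Theory Num.Theory.

(* Since a u + b v = 1, every integer has a unique representation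
   x = al * a + be * b with 0 <= be < a, and x lies in <a,b> iff al >= 0.
   With P = |u| and Q = |v| we have Q b - P a = +-1, so the two neighbours
   of x are (al - P) a + (be + Q) b and (al + P) a + (be - Q) b.
   Renormalising their b-coefficients into [0, a) and using 2 P <= b and
   2 Q <= a shows that a gap x is isolated exactly when -P <= al < 0 and
   a - Q <= be < a: a P x Q grid whose corner al = -P, be = a - Q is the
   least isolated gap. *)

Local Open Scope ring_scope.

Section StandardRepresentation.

Variables (a b : nat) (u v : int).
Hypotheses (bezout : a%:Z * u + b%:Z * v = 1) (a_gt0 : (0 < a)%N).

Lemma std_repr_exists (x : int) :
  exists al be : int, 0 <= be < a%:Z /\ x = al * a%:Z + be * b%:Z.
Proof.
exists (x * u + ((x * v) %/ a%:Z)%Z * b%:Z), ((x * v) %% a%:Z)%Z; split.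
- by rewrite modz_ge0 ?ltz_pmod //; lia.
- have x_eq : x = x * u * a%:Z + (x * v) * b%:Z by rewrite -[LHS]mulr1 -bezout; ring.
  by rewrite {1}x_eq {1}(divz_eq (x * v) a%:Z); ring.
Qed.

Lemma std_repr_uniq (al1 be1 al2 be2 : int) :
  0 <= be1 < a%:Z -> 0 <= be2 < a%:Z ->
  al1 * a%:Z + be1 * b%:Z = al2 * a%:Z + be2 * b%:Z -> al1 = al2.
Proof.
move=> /andP[be1_ge0 be1_lt] /andP[be2_ge0 be2_lt] eq_repr.
have dvd_dbe : be1 - be2 = a%:Z * ((be1 - be2) * u + (al2 - al1) * v).
  have b_dbe : (be1 - be2) * b%:Z = (al2 - al1) * a%:Z by lia.
  rewrite -[LHS]mulr1 -bezout.
  transitivity (a%:Z * u * (be1 - be2) + v * ((be1 - be2) * b%:Z)); first by ring.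
  by rewrite b_dbe; ring.
set t := _ * u + _ in dvd_dbe.
have be_eq : be1 = be2 by case: (ltrgtP t 0) => t_sgn; nia.
by move: eq_repr; rewrite be_eq => /addIr /mulIf; apply; lia.
Qed.

Lemma in_sg2_repr (k : int) (n : nat) (al be : int) :
  k * a%:Z <= be < (k + 1) * a%:Z -> n%:Z = al * a%:Z + be * b%:Z ->
  in_sg2 a b n <-> 0 <= al + k * b%:Z.
Proof.
move=> /andP[be_ge be_lt] n_eq.
have n_std : n%:Z = (al + k * b%:Z) * a%:Z + (be - k * a%:Z) * b%:Z.
  by rewrite n_eq; ring.
split.
- move=> [l1 [l2 n_l]].
  have n_l_std : n%:Z = (l1 + (l2 %/ a) * b)%N%:Z * a%:Z + (l2 %% a)%N%:Z * b%:Z.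
    by rewrite n_l {1}(divn_eq l2 a); lia.
  have std_mod : (l2 %% a < a)%N by rewrite ltn_mod.
  have repr_eq : (al + k * b%:Z) * a%:Z + (be - k * a%:Z) * b%:Z
                 = (l1 + (l2 %/ a) * b)%N%:Z * a%:Z + (l2 %% a)%N%:Z * b%:Z.
    by rewrite -n_std -n_l_std.
  by rewrite (std_repr_uniq _ _ repr_eq) //; lia.
- move=> al_ge0; exists `|(al + k * b%:Z)%R|%N, `|(be - k * a%:Z)%R|%N.
  by apply/eqP; rewrite -(eqr_nat int) natrD !natrM !natz !gez0_abs -?n_std //;
    lia.
Qed.

End StandardRepresentation.

Section IsolatedGaps.

Variables (a b : nat) (u v : int).
Hypotheses (bezout : a%:Z * u + b%:Z * v = 1) (a_gt0 : (0 < a)%N).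
Hypotheses (u_le : (2 * `|u| <= b)%N) (v_le : (2 * `|v| <= a)%N).

Lemma bezout_abs : `|v| * b%:Z - `|u| * a%:Z = 1 \/ `|v| * b%:Z - `|u| * a%:Z = -1.
Proof. by case: (lerP 0 u); case: (lerP 0 v); nia. Qed.

Lemma neighbours_in_sg2 (x : nat) (al be : int) :
  (0 < x)%N -> x%:Z = al * a%:Z + be * b%:Z ->
  exists y z : nat,
    [/\ y%:Z = (al - `|u|) * a%:Z + (be + `|v|) * b%:Z,
        z%:Z = (al + `|u|) * a%:Z + (be - `|v|) * b%:Z
      & in_sg2 a b x.-1 /\ in_sg2 a b x.+1 <-> in_sg2 a b y /\ in_sg2 a b z].
Proof.
move=> x_gt0 x_eq; case: bezout_abs => shift_eq.
- by exists x.+1, x.-1; split; [lia | lia | tauto].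
- by exists x.-1, x.+1; split; [lia | lia | tauto].
Qed.

Lemma upper_neighbour_in_sg2 (n : nat) (al be : int) :
  0 <= be < a%:Z -> al < 0 ->
  n%:Z = (al - `|u|) * a%:Z + (be + `|v|) * b%:Z ->
  in_sg2 a b n <-> a%:Z <= be + `|v| /\ `|u| <= al + b%:Z.
Proof.
move=> be_std al_lt0 n_eq.
have [be_hi | be_lo] := lerP a%:Z (be + `|v|).
- by rewrite (in_sg2_repr bezout a_gt0 (k := 1) _ n_eq); lia.
- by rewrite (in_sg2_repr bezout a_gt0 (k := 0) _ n_eq); lia.
Qed.

Lemma lower_neighbour_in_sg2 (n : nat) (al be : int) :
  0 <= be < a%:Z -> al < 0 ->
  n%:Z = (al + `|u|) * a%:Z + (be - `|v|) * b%:Z ->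
  in_sg2 a b n <-> `|v| <= be /\ 0 <= al + `|u|.
Proof.
move=> be_std al_lt0 n_eq.
have [be_hi | be_lo] := lerP `|v| be.
- by rewrite (in_sg2_repr bezout a_gt0 (k := 0) _ n_eq); lia.
- by rewrite (in_sg2_repr bezout a_gt0 (k := -1) _ n_eq); lia.
Qed.

Lemma isolated_gapE (x : nat) :
  isolated_gap a b x <->
  exists al be : int,
    [/\ - `|u| <= al < 0, a%:Z - `|v| <= be < a%:Z & x%:Z = al * a%:Z + be * b%:Z].
Proof.
split.
- case=> x_gap x_gt0 pred_in succ_in.
  have [al [be [be_std x_eq]]] := std_repr_exists bezout a_gt0 x.
  have al_lt0 : al < 0.
    rewrite ltNge; apply/negP => al_ge0; apply: x_gap.
    by rewrite (in_sg2_repr bezout a_gt0 (k := 0) _ x_eq); lia.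
  have [y [z [y_eq z_eq neighbours_iff]]] := neighbours_in_sg2 x_gt0 x_eq.
  have [y_in z_in] := neighbours_iff.1 (conj pred_in succ_in).
  have [] := (upper_neighbour_in_sg2 be_std al_lt0 y_eq).1 y_in.
  have [] := (lower_neighbour_in_sg2 be_std al_lt0 z_eq).1 z_in.
  by exists al, be; split => //; lia.
- move=> [al [be [al_range be_range x_eq]]].
  have be_std : 0 <= be < a%:Z by lia.
  have al_lt0 : al < 0 by lia.
  have x_gap : ~ in_sg2 a b x.
    by rewrite (in_sg2_repr bezout a_gt0 (k := 0) _ x_eq); lia.
  have x_gt0 : (0 < x)%N.
    by case: x x_gap {x_eq} => // x0_gap; case: x0_gap; exists 0%N, 0%N.
  have [y [z [y_eq z_eq neighbours_iff]]] := neighbours_in_sg2 x_gt0 x_eq.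
  have /neighbours_iff [pred_in succ_in] : in_sg2 a b y /\ in_sg2 a b z.
    rewrite (upper_neighbour_in_sg2 be_std al_lt0 y_eq).
    by rewrite (lower_neighbour_in_sg2 be_std al_lt0 z_eq); lia.
  by [].
Qed.

Lemma isolated_gap_grid (x : nat) :
  isolated_gap a b x <->
  exists k j : nat,
    [/\ (k < `|v|)%N, (j < `|u|)%N & x = ((a - `|v|) * b - `|u| * a + k * b + j * a)%N].
Proof.
have corner_ge : (`|u| * a <= (a - `|v|) * b)%N by nia.
rewrite isolated_gapE; split.
- move=> [al [be [al_range be_range x_eq]]].
  exists `|(be - (a%:Z - `|v|))%R|%N, `|(al + `|u|)%R|%N; split; lia.
- move=> [k [j [k_lt j_lt x_eq]]].
  exists (j%:Z - `|u|), (a%:Z - `|v| + k%:Z); split; lia.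
Qed.

End IsolatedGaps.

Local Close Scope ring_scope.

Theorem theorem4p8 (a b : nat) (u v : int) (h : nat) :
  coprime a b -> 1 < a -> a < b ->
  (* (u,v) is the definitely least solution of a x + b y = 1 *)
  (a%:Z * u + b%:Z * v = 1)%R ->
  (2 * `|u| <= b)%N -> (2 * `|v| <= a)%N ->
  (* h = min I(S) *)
  isolated_gap a b h -> (forall x, isolated_gap a b x -> h <= x) ->
  forall x : nat,
    isolated_gap a b x <->
    exists k j : nat, [/\ k < `|v|, j < `|u| & x = h + k * b + j * a].
Proof.
move=> _ a_gt1 _ bezout u_le v_le h_gap h_min x.
have gridE := isolated_gap_grid bezout (ltnW a_gt1) u_le v_le.
have [k0 [j0 [k0_lt j0_lt h_eq]]] := (gridE h).1 h_gap.
have corner_gap : isolated_gap a b ((a - `|v|) * b - `|u| * a).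
  by apply/gridE; exists 0, 0; split; rewrite ?addn0; lia.
have := h_min _ corner_gap.
rewrite gridE; split=> -[k [j [k_lt j_lt x_eq]]]; exists k, j; split; lia.
Qed.
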